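(* Let $\mathcal{D}\subseteq\mathbb{R}^m$ be a nonempty polyhedron, $c,d\in\mathbb{R}^m$, and $f(\delta):=\inf_{x\in\mathcal{D}}(c-\delta d)^\top x$. Assume that there exists $\delta'\in\operatorname{dom}(f)$ such that $f(\delta')=(c-\delta'd)^\top x'\le0$ for some $x'\in\mathcal{D}$ with $d^\top x'>0$. If $f$ has a root, then the optimal value of the problem $\inf\ c^\top x/d^\top x$ subject to $d^\top x>0$, $x\in\mathcal{D}$, equals the largest root of $f$ and is attained. Otherwise, this optimal value is $-\infty$.
   Context: $\operatorname{dom}(f):=\{\delta: -\infty<f(\delta)<\infty\}$. *)

From HB Require Import structures.
From mathcomp Require Import all_boot all_order all_algebra.
From mathcomp Require Import all_classical all_reals ereal.
Set Implicit Arguments. Unset Strict Implicit. Unset Printing Implicit Defensive.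
Import Order.TTheory GRing.Theory Num.Theory.
Local Open Scope ring_scope.
Local Open Scope classical_set_scope.

Definition dotv (R : realType) (m : nat) (u x : 'cV[R]_m) : R :=
  \sum_(i < m) u i 0 * x i 0.

Definition is_polyhedron (R : realType) (m : nat) (D : set 'cV[R]_m) : Prop :=
  exists (k : nat) (A : 'M[R]_(k, m)) (b : 'cV[R]_k),
    D = [set x | forall i : 'I_k, (A *m x) i 0 <= b i 0].

Definition fpar (R : realType) (m : nat) (D : set 'cV[R]_m) (c d : 'cV[R]_m)
  (delta : R) : \bar R :=
  ereal_inf [set (dotv (c - delta *: d) x)%:E | x in D].

Definition in_dom (R : realType) (F : R -> \bar R) (delta : R) : Prop :=
  (-oo < F delta)%E /\ (F delta < +oo)%E.

Definition ratio_opt (R : realType) (m : nat) (D : set 'cV[R]_m) (c d : 'cV[R]_m)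
  : \bar R :=
  ereal_inf [set (dotv c x / dotv d x)%:E | x in [set x | D x /\ 0 < dotv d x]].

From HB Require Import structures.
From mathcomp Require Import all_boot all_order all_algebra.
From mathcomp Require Import all_classical all_reals ereal.
From mathcomp Require Import ring lra.
Set Implicit Arguments. Unset Strict Implicit. Unset Printing Implicit Defensive.
Import Order.TTheory GRing.Theory Num.Theory.
Local Open Scope ring_scope.
Local Open Scope classical_set_scope.

(* Charnes-Cooper: for D = {x | A x <= b}, the substitution y = x / d^T x, t = 1 / d^T x
   turns the ratio program into the linear program  min c^T y  s.t.  d^T y = 1, A y <= t b,
   t >= 0.  A linear program that is feasible and bounded below attains its minimum (induction
   on the number of inequalities: drop one; if the relaxed optimum violates it, every feasible
   point can be pushed onto its hyperplane without increasing the objective).  Feasible points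
   with t = 0 are recession directions of D, which the hypothesis on x' shows to be no better
   than x'.  So a ratio program bounded below has a minimiser z, and for rho = c^T z / d^T z
   convexity of D gives (c - rho d)^T x >= 0 on all of D, i.e. f(rho) = 0.  Every root of f is
   a lower bound of the ratio; hence rho is the largest root, and without roots the ratio is
   unbounded below. *)

Section AffineProgram.
Variables (R : realFieldType) (U : lmodType R).

Definition affine (h : U -> R) :=
  forall x y t, h ((1 - t) *: x + t *: y) = (1 - t) * h x + t * h y.

Definition affine_closed (V : set U) :=
  forall x y t, V x -> V y -> V ((1 - t) *: x + t *: y).

Lemma affine_bounded_below_le (phi : U -> R) (V : set U) (M : R) x y :
  affine phi -> affine_closed V -> (forall z, V z -> M <= phi z) ->
  V x -> V y -> phi x <= phi y.
Proof.
move=> aphi aV HM Vx Vy; rewrite leNgt; apply/negP => ltyx.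
have Mx : M <= phi x by exact: HM.
have gap : 0 < phi x - phi y by rewrite subr_gt0.
pose t := (phi x - M + 1) / (phi x - phi y).
have := HM _ (aV x y t Vx Vy); rewrite aphi.
have -> : (1 - t) * phi x + t * phi y = phi x - t * (phi x - phi y) by ring.
by rewrite /t mulfVK ?gt_eqF //; lra.
Qed.

Lemma affine_segment_le (h : U -> R) x y t a :
  affine h -> 0 <= t <= 1 -> h x <= a -> h y <= a -> h ((1 - t) *: x + t *: y) <= a.
Proof. by move=> ah /andP[t0 t1] hx hy; rewrite ah; nra. Qed.

Lemma affine_segment_root (h : U -> R) x y :
  affine h -> h x <= 0 -> 0 < h y ->
  exists2 t, 0 <= t <= 1 & h ((1 - t) *: x + t *: y) = 0.
Proof.
move=> ah hx hy; have gap : 0 < h y - h x by lra.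
exists (- h x / (h y - h x)).
  by rewrite divr_ge0 ?ler_pdivrMr //= ?mul1r; lra.
by rewrite ah; field; rewrite gt_eqF.
Qed.

Variables (I : eqType) (g : I -> U -> R) (phi : U -> R).
Hypotheses (affine_phi : affine phi) (affine_g : forall i, affine (g i)).

Definition feasible (V : set U) (s : seq I) (x : U) :=
  V x /\ {in s, forall i, g i x <= 0}.

Lemma feasible_cons V i s x :
  feasible V (i :: s) x <-> g i x <= 0 /\ feasible V s x.
Proof.
split=> [[Vx gx]|[gix [Vx gx]]].
  by split; [apply: gx; rewrite inE eqxx | split=> // j js; apply: gx; rewrite inE js orbT].
by split=> // j; rewrite inE => /orP[/eqP -> //|]; apply: gx.
Qed.

Lemma feasible_cut V i s y x :
  affine_closed V -> feasible V s y -> 0 < g i y ->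
  feasible V (i :: s) x -> phi y <= phi x ->
  exists2 w, feasible (V `&` [set z | g i z = 0]) s w & phi w <= phi x.
Proof.
move=> aV [Vy gy] giy /feasible_cons[gix [Vx gx]] yx.
have [t t01 git] := affine_segment_root (affine_g i) gix giy.
exists ((1 - t) *: x + t *: y); last exact: affine_segment_le.
by split; [split=> //; exact: aV | move=> j js; apply: affine_segment_le; auto].
Qed.

Lemma affine_program_min (s : seq I) (V : set U) :
  affine_closed V -> (exists x, feasible V s x) ->
  (exists M, forall x, feasible V s x -> M <= phi x) ->
  exists2 z, feasible V s z & forall x, feasible V s x -> phi z <= phi x.
Proof.
elim: s V => [|i s IH] V aV [x0 Fx0] [M HM].
  exists x0 => // x [Vx _].
  by apply: (affine_bounded_below_le _ aV) Fx0.1 Vx => // z Vz; apply: HM.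
have [y Fy ymin] : exists2 y, feasible V s y &
    forall x, feasible V (i :: s) x -> phi y <= phi x.
  have [[M' HM']|unbounded] :=
    pselect (exists M', forall x, feasible V s x -> M' <= phi x).
    have /feasible_cons[_ Fx0s] := Fx0.
    have [y Fy ymin] := IH V aV (ex_intro _ x0 Fx0s) (ex_intro _ M' HM').
    by exists y => // x /feasible_cons[_ /ymin].
  have [y Fy yM] : exists2 y, feasible V s y & phi y < M.
    apply: contra_notP unbounded => none; exists M => x Fx.
    by rewrite leNgt; apply/negP => xM; apply: none; exists x.
  by exists y => // x /HM /(lt_le_trans yM) /ltW.
have [giy|giy] := lerP (g i y) 0.
  by exists y => //; apply/feasible_cons.
pose V' := V `&` [set z | g i z = 0].
have aV' : affine_closed V'.
  by move=> a b t [Va ga] [Vb gb]; split; [exact: aV | rewrite /= affine_g ga gb; ring].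
have feasible_V' x : feasible V' s x -> feasible V (i :: s) x.
  by move=> [[Vx gx] sx]; apply/feasible_cons; rewrite gx.
have [x1 Fx1 _] := feasible_cut aV Fy giy Fx0 (ymin _ Fx0).
have [z Fz zmin] := IH V' aV' (ex_intro _ x1 Fx1)
  (ex_intro _ M (fun x Fx => HM x (feasible_V' x Fx))).
exists z => [|x Fx]; first exact: feasible_V'.
have [w Fw wx] := feasible_cut aV Fy giy Fx (ymin _ Fx).
exact: le_trans (zmin _ Fw) wx.
Qed.

End AffineProgram.

Definition is_convex (R : numDomainType) (U : lmodType R) (D : set U) :=
  forall x y t, 0 <= t <= 1 -> D x -> D y -> D ((1 - t) *: x + t *: y).

Lemma ereal_inf_image_min (R : realType) (T : Type) (S : set T) (h : T -> R) z :
  S z -> (forall x, S x -> h z <= h x) -> ereal_inf [set (h x)%:E | x in S] = (h z)%:E.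
Proof.
move=> Sz zmin; apply/le_anti/andP; split; first by apply: ereal_inf_lbound; exists z.
by apply: le_ereal_inf_tmp => _ [x Sx <-]; rewrite lee_fin zmin.
Qed.

Section LinearFractional.
Variables (R : realType) (m : nat).
Implicit Types (c d u x y : 'cV[R]_m) (D : set 'cV[R]_m).

Lemma dotvDr u x y : dotv u (x + y) = dotv u x + dotv u y.
Proof. by rewrite /dotv -big_split; apply: eq_bigr => i _; rewrite !mxE mulrDr. Qed.

Lemma dotvZr u a x : dotv u (a *: x) = a * dotv u x.
Proof. by rewrite /dotv mulr_sumr; apply: eq_bigr => i _; rewrite !mxE mulrCA. Qed.

Lemma dotvBZl c d r x : dotv (c - r *: d) x = dotv c x - r * dotv d x.
Proof. by rewrite /dotv mulr_sumr -sumrB; apply: eq_bigr => i _; rewrite !mxE; ring. Qed.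

Definition polyset k (A : 'M[R]_(k, m)) (b : 'cV[R]_k) : set 'cV[R]_m :=
  [set x | forall i, (A *m x) i 0 <= b i 0].

Lemma polyset_convex k (A : 'M[R]_(k, m)) b : is_convex (polyset A b).
Proof.
move=> x y t /andP[t0 t1] Ax Ay i.
have := Ax i; have := Ay i; rewrite mulmxDr -!scalemxAr !mxE; nra.
Qed.

Lemma polyset_recession k (A : 'M[R]_(k, m)) b x y :
  polyset A b x -> (forall i, (A *m y) i 0 <= 0) -> polyset A b (x + y).
Proof. by move=> Ax Ay i; rewrite mulmxDr mxE; have := Ax i; have := Ay i; lra. Qed.

Variables (c d : 'cV[R]_m).

Definition lfrac x := dotv c x / dotv d x.

Lemma fpar_le D r x : D x -> (fpar D c d r <= (dotv (c - r *: d) x)%:E)%E.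
Proof. by move=> Dx; apply: ereal_inf_lbound; exists x. Qed.

Lemma ratio_opt_le D x : D x -> 0 < dotv d x -> (ratio_opt D c d <= (lfrac x)%:E)%E.
Proof. by move=> Dx dx; apply: ereal_inf_lbound; exists x. Qed.

Lemma lfrac_ge r x : 0 < dotv d x -> (r <= lfrac x) = (0 <= dotv (c - r *: d) x).
Proof. by move=> dx; rewrite /lfrac ler_pdivlMr // dotvBZl subr_ge0. Qed.

Lemma lfrac_le r x : 0 < dotv d x -> (lfrac x <= r) = (dotv (c - r *: d) x <= 0).
Proof. by move=> dx; rewrite /lfrac ler_pdivrMr // dotvBZl subr_le0. Qed.

Lemma fpar_root_le_lfrac D r x :
  fpar D c d r = 0%:E -> D x -> 0 < dotv d x -> r <= lfrac x.
Proof. by move=> fr Dx dx; rewrite lfrac_ge // -lee_fin -fr fpar_le. Qed.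

Definition lfrac_argmin D z :=
  [/\ D z, 0 < dotv d z & forall x, D x -> 0 < dotv d x -> lfrac z <= lfrac x].

Lemma lfrac_argmin_dotv_ge0 D z x :
  is_convex D -> lfrac_argmin D z -> D x -> 0 <= dotv (c - lfrac z *: d) x.
Proof.
move=> convexD [Dz dz zmin] Dx.
have [dx|dx] := ltrP 0 (dotv d x); first by rewrite -lfrac_ge // zmin.
have z0 : dotv (c - lfrac z *: d) z = 0 by rewrite dotvBZl /lfrac; field; rewrite gt_eqF.
(* Move from z towards x only halfway to the hyperplane d^T = 0, so d^T stays positive. *)
have gap : 0 < dotv d z - dotv d x by lra.
pose t := dotv d z / (2 * (dotv d z - dotv d x)).
have t0 : 0 < t by apply: divr_gt0 => //; lra.
have t1 : t <= 1 by rewrite ler_pdivrMr; lra.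
have dt : t * (dotv d z - dotv d x) = dotv d z / 2 by rewrite /t; field; rewrite gt_eqF.
have t01 : 0 <= t <= 1 by rewrite ltW.
have Dw := convexD _ _ _ t01 Dz Dx.
have dw : 0 < dotv d ((1 - t) *: z + t *: x) by rewrite dotvDr !dotvZr; lra.
have := lfrac_ge (lfrac z) dw; rewrite zmin // => /esym.
rewrite !dotvBZl in z0 *; rewrite !dotvDr !dotvZr.
have -> : (1 - t) * dotv c z + t * dotv c x - lfrac z * ((1 - t) * dotv d z + t * dotv d x)
  = (1 - t) * (dotv c z - lfrac z * dotv d z) + t * (dotv c x - lfrac z * dotv d x) by ring.
by rewrite z0 mulr0 add0r pmulr_rge0.
Qed.

Lemma lfrac_argmin_root D z :
  is_convex D -> lfrac_argmin D z -> fpar D c d (lfrac z) = 0%:E.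
Proof.
move=> convexD zmin; case: (zmin) => Dz dz _.
have z0 : dotv (c - lfrac z *: d) z = 0 by rewrite dotvBZl /lfrac; field; rewrite gt_eqF.
rewrite -[0]z0; apply: ereal_inf_image_min => // x Dx.
by rewrite z0 (lfrac_argmin_dotv_ge0 convexD).
Qed.

Lemma lfrac_argmin_ratio_opt D z : lfrac_argmin D z -> ratio_opt D c d = (lfrac z)%:E.
Proof.
by case=> Dz dz zmin; apply: (ereal_inf_image_min (h := lfrac)) => // x []; exact: zmin.
Qed.

End LinearFractional.

Section CharnesCooper.
Variables (R : realType) (m k : nat) (A : 'M[R]_(k, m)) (b : 'cV[R]_k) (c d : 'cV[R]_m).
Local Notation D := (polyset A b).
Local Notation U := ('cV[R]_m * R^o)%type.

Definition cc_constraint (o : option 'I_k) (p : U) : R :=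
  if o is Some i then (A *m p.1) i 0 - p.2 * b i 0 else - p.2.

Definition cc_feasible : set U :=
  feasible cc_constraint [set p | dotv d p.1 = 1] (enum {: option 'I_k}).

Definition cc_lift (x : 'cV[R]_m) : U := ((dotv d x)^-1 *: x, (dotv d x)^-1).

Lemma comb_pairE (p q : U) t :
  (1 - t) *: p + t *: q = ((1 - t) *: p.1 + t *: q.1, (1 - t) * p.2 + t * q.2).
Proof. by []. Qed.

Lemma dotv_fst_affine (u : 'cV[R]_m) : affine (fun p : U => dotv u p.1).
Proof. by move=> p q t; rewrite dotvDr !dotvZr. Qed.

Lemma cc_constraint_affine o : affine (cc_constraint o).
Proof.
case: o => [i|] p q t; rewrite comb_pairE /=; last by ring.
rewrite mulmxDr -!scalemxAr !mxE; ring.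
Qed.

Lemma cc_hyperplane_affine_closed : affine_closed [set p : U | dotv d p.1 = 1].
Proof. by move=> p q t /= dp dq; rewrite dotvDr !dotvZr dp dq; ring. Qed.

Lemma cc_feasibleP p :
  cc_feasible p <->
  [/\ dotv d p.1 = 1, 0 <= p.2 & forall i, (A *m p.1) i 0 <= p.2 * b i 0].
Proof.
split=> [[dp Fp]|[dp t0 Ap]].
  split=> //; first by have := Fp None (mem_enum _ _); rewrite /= oppr_le0.
  by move=> i; have := Fp (Some i) (mem_enum _ _); rewrite /= subr_le0.
by split=> // -[i|] _ /=; rewrite ?subr_le0 ?oppr_le0.
Qed.

Lemma cc_lift_feasible x : D x -> 0 < dotv d x -> cc_feasible (cc_lift x).
Proof.
move=> Dx dx; apply/cc_feasibleP; split=> /=.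
- by rewrite dotvZr mulVf ?gt_eqF.
- by rewrite invr_ge0 ltW.
- by move=> i; rewrite -scalemxAr mxE ler_pM2l ?invr_gt0.
Qed.

Lemma cc_lift_value x : dotv c (cc_lift x).1 = lfrac c d x.
Proof. by rewrite dotvZr mulrC. Qed.

Lemma cc_unlift p : cc_feasible p -> 0 < p.2 ->
  let x := p.2^-1 *: p.1 in [/\ D x, 0 < dotv d x & lfrac c d x = dotv c p.1].
Proof.
move=> /cc_feasibleP[dp _ Ap] t0; split.
- by move=> i; rewrite -scalemxAr mxE ler_pdivrMl // Ap.
- by rewrite dotvZr dp mulr1 invr_gt0.
- by rewrite /lfrac !dotvZr dp; field; rewrite gt_eqF.
Qed.

Lemma cc_recession_value r x' p :
  (forall x, D x -> dotv (c - r *: d) x' <= dotv (c - r *: d) x) -> D x' ->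
  cc_feasible p -> p.2 = 0 -> r <= dotv c p.1.
Proof.
move=> x'min Dx' /cc_feasibleP[dp _ Ap] t0.
have Dy : D (x' + p.1) by apply: polyset_recession => // i; have := Ap i; rewrite t0 mul0r.
by have := x'min _ Dy; rewrite !dotvBZl !dotvDr dp; lra.
Qed.

Section Witness.
Variables (r : R) (x' : 'cV[R]_m).
Hypotheses (x'min : forall x, D x -> dotv (c - r *: d) x' <= dotv (c - r *: d) x)
  (Dx' : D x') (dx' : 0 < dotv d x') (x'_nonpos : dotv (c - r *: d) x' <= 0).

Lemma cc_feasible_lfrac_le p : cc_feasible p ->
  exists2 x, D x /\ 0 < dotv d x & lfrac c d x <= dotv c p.1.
Proof.
move=> Fp; have /cc_feasibleP[_ t0 _] := Fp.
have [tpos|tle0] := ltrP 0 p.2.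
  by have [Dx dx e] := cc_unlift Fp tpos; exists (p.2^-1 *: p.1); rewrite ?e.
exists x' => //; apply: le_trans (cc_recession_value x'min Dx' Fp _).
  by rewrite lfrac_le.
by apply/le_anti; rewrite tle0.
Qed.

Lemma lfrac_argmin_exists :
  (exists M, forall x, D x -> 0 < dotv d x -> M <= lfrac c d x) ->
  exists z, lfrac_argmin c d D z.
Proof.
move=> [M HM].
have [p Fp pmin] : exists2 p, cc_feasible p &
    forall q, cc_feasible q -> dotv c p.1 <= dotv c q.1.
  apply: (affine_program_min (dotv_fst_affine c) cc_constraint_affine).
  - exact: cc_hyperplane_affine_closed.
  - by exists (cc_lift x'); exact: cc_lift_feasible.
  - exists M => q /cc_feasible_lfrac_le[x [Dx dx] xq].
    exact: le_trans (HM x Dx dx) xq.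
have [z [Dz dz] zp] := cc_feasible_lfrac_le Fp.
exists z; split=> // x Dx dx.
by rewrite (le_trans zp) // -cc_lift_value; apply/pmin/cc_lift_feasible.
Qed.

End Witness.
End CharnesCooper.

Theorem lemma3p9 (R : realType) (m : nat) (D : set 'cV[R]_m) (c d : 'cV[R]_m) :
  is_polyhedron D -> D !=set0 ->
  (exists (delta' : R) (x' : 'cV[R]_m),
      in_dom (fpar D c d) delta' /\ D x' /\ 0 < dotv d x' /\
      fpar D c d delta' = (dotv (c - delta' *: d) x')%:E /\
      dotv (c - delta' *: d) x' <= 0) ->
  ((exists r : R, fpar D c d r = (0:R)%:E) ->
     exists rs : R,
       fpar D c d rs = (0:R)%:E /\
       (forall r : R, fpar D c d r = (0:R)%:E -> r <= rs) /\
       ratio_opt D c d = rs%:E /\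
       (exists x : 'cV[R]_m, D x /\ 0 < dotv d x /\ dotv c x / dotv d x = rs)) /\
  (~ (exists r : R, fpar D c d r = (0:R)%:E) -> ratio_opt D c d = -oo%E).
Proof.
(* Nonemptiness of D and r \in dom(f) follow from the remaining hypotheses. *)
move=> [k [A [b ->]]] _ [r [x' [_ [Dx' [dx' [fx' x'_nonpos]]]]]].
have x'min x : polyset A b x -> dotv (c - r *: d) x' <= dotv (c - r *: d) x.
  by move=> Dx; rewrite -lee_fin -fx'; exact: fpar_le.
have argmin := lfrac_argmin_exists x'min Dx' dx' x'_nonpos.
have convexD : is_convex (polyset A b) by exact: polyset_convex.
split=> [[r0 fr0]|noroot].
  have [z zmin] := argmin (ex_intro _ r0 (fun x => fpar_root_le_lfrac fr0)).
  have [Dz dz _] := zmin.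
  exists (lfrac c d z); split; first exact: lfrac_argmin_root.
  split; first by move=> r' fr'; exact: fpar_root_le_lfrac fr' Dz dz.
  by split; [exact: lfrac_argmin_ratio_opt | exists z].
have := ratio_opt_le c Dx' dx'; case E: (ratio_opt _ c d) => [v| |] // _.
case: noroot; have [|z zmin] := argmin.
  by exists v => x Dx dx; rewrite -lee_fin -E; exact: ratio_opt_le.
by exists (lfrac c d z); exact: lfrac_argmin_root.
Qed.
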